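(* Let $X=\Gamma_1\sqcup\Gamma_2$ be a Heisenberg partition of a topological space $X$. Then for every continuous injective map $\gamma\colon\mathbb T\to X$ we have $\gamma(\mathbb T)\subseteq\Gamma_2$.
   Context: $\mathbb T=\{z\in\mathbb C\mid |z|=1\}$. A Heisenberg partition of $X$ is a partition $X=\Gamma_1\sqcup\Gamma_2$ such that for some integer $n\ge1$: (i) $\Gamma_1$ is open in $X$ and there is a homeomorphism $\psi_1\colon\mathbb R^\times\to\Gamma_1$ ($\mathbb R^\times=\mathbb R\setminus\{0\}$); (ii) there is a homeomorphism $\psi_2\colon\mathbb R^{2n}\to\Gamma_2$; (iii) for every subset $A\subseteq\mathbb R^\times$ the following are equivalent: $0$ is an accumulation point of $A$; $\Gamma_2\cap\overline{\psi_1(A)}\ne\emptyset$; $\Gamma_2\subseteq\overline{\psi_1(A)}$. *)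

From HB Require Import structures.
From mathcomp Require Import all_boot all_order all_algebra.
From mathcomp Require Import all_classical all_reals all_analysis.
Unset Printing Implicit Defensive.
Import Order.TTheory GRing.Theory Num.Theory numFieldNormedType.Exports.
Local Open Scope classical_set_scope.
Local Open Scope ring_scope.

Definition homeo_on {S T : topologicalType} (A : set S) (B : set T) (f : S -> T) :=
  [/\ {within A, continuous f}, f @` A = B &
      exists g : T -> S, {within B, continuous g} /\ (forall x, A x -> g (f x) = x)].

Definition Rtimes (R : realType) : set R := [set x | x != 0].

Definition circle (R : realType) : set (R * R)%type :=
  [set z | z.1 ^+ 2 + z.2 ^+ 2 = 1].

Definition heisenberg_partition (R : realType) (X : topologicalType)
    (G1 G2 : set X) :=
  [/\ G1 `&` G2 = set0, G1 `|` G2 = setT &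
  exists n : nat, (1 <= n)%N /\
  exists (psi1 : R -> X) (psi2 : 'rV[R]_(2 * n) -> X),
    [/\ open G1, homeo_on (Rtimes R) G1 psi1, homeo_on setT G2 psi2 &
        forall A : set R, A `<=` Rtimes R ->
          (limit_point A 0 <-> G2 `&` closure (psi1 @` A) !=set0) /\
          (G2 `&` closure (psi1 @` A) !=set0 <-> G2 `<=` closure (psi1 @` A))]].

From HB Require Import structures.
From mathcomp Require Import all_boot all_order all_algebra.
From mathcomp Require Import all_classical all_reals all_analysis.
From mathcomp Require Import ring lra.
Import numFieldNormedType.Exports.
Import Order.TTheory GRing.Theory Num.Theory.
Local Open Scope classical_set_scope.
Local Open Scope ring_scope.

(* Suppose gamma t0 lies in G1 and let phi := psi1^-1 : G1 -> R^x.  Condition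
   (iii) says that |phi| tends to 0 when approaching G2, so for 0 < c the
   function max(+-phi - c, 0) on G1, extended by 0 on G2, is continuous on X;
   the sign is chosen to make it positive at gamma t0.  Composed with gamma it
   is a continuous function on the circle, which attains a positive maximum.
   Near the maximum it is positive, hence injective (phi and gamma are), and a
   continuous injective function on an arc has no interior maximum. *)

Section RealLine.
Context {R : realType}.
Implicit Types (f : R -> R) (p x r : R).

Lemma periodic_intr {T : Type} {f : R -> T} {p : R} :
  (forall x, f (x + p) = f x) -> forall (k : int) x, f (x + k%:~R * p) = f x.
Proof.
move=> fp; have fpn (n : nat) x : f (x + n%:R * p) = f x.
  elim: n => [|n IHn]; first by rewrite mul0r addr0.
  by rewrite -[n.+1]addn1 natrD mulrDl mul1r addrA fp IHn.
case=> [n|n] x; first exact: fpn.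
by rewrite NegzE intrN mulNr -pmulrn -(fpn n.+1 (x - _)) subrK.
Qed.

Lemma continuous_periodic_max f p : 0 < p -> continuous f ->
  (forall x, f (x + p) = f x) -> exists x, forall t, f t <= f x.
Proof.
move=> p0 fc fp; have [x _ xmax] := EVT_max (ltW p0) (continuous_subspaceT fc).
exists x => t; pose k := Num.floor (t / p).
rewrite -(periodic_intr fp (- k)) xmax // in_itv /= mulrNz mulNr.
have := floor_itv (t / p); rewrite -/k intrD1 => /andP[kl ku].
rewrite subr_ge0 -ler_pdivlMr // kl /= lerBlDl.
by rewrite -[X in _ + X]mul1r -mulrDl -ler_pdivrMr // ltW.
Qed.

Lemma continuous_inj_no_local_max f x r : 0 < r ->
  {within `]x - r, x + r[, continuous f} -> {in `]x - r, x + r[ &, injective f} ->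
  ~ (forall t, t \in `]x - r, x + r[ -> f t <= f x).
Proof.
move=> r0 fc fi xmax.
have [xI dI eI] : [/\ x \in `]x - r, x + r[, x - r / 2 \in `]x - r, x + r[
                   & x + r / 2 \in `]x - r, x + r[].
  by rewrite !in_itv /=; split; apply/andP; split; lra.
have [fup|fdown] := itv_continuous_inj_mono fc fi.
- suff : f x < f (x + r / 2) by rewrite ltNge xmax.
  by apply: fup => //; lra.
- suff : f x < f (x - r / 2) by rewrite ltNge xmax.
  by apply: fdown => //; lra.
Qed.
End RealLine.

Lemma continuous_comp_within {S T U : topologicalType} (A : set T)
    (h : T -> U) (f : S -> T) :
  {within A, continuous h} -> continuous f -> (forall x, A (f x)) ->
  continuous (h \o f).
Proof.
move=> /subspace_continuousP hc fc fA x M /= /(hc _ (fA x)) /fc hM.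
exact: (filterS (fun y (My : A (f y) -> _) => My (fA y)) hM).
Qed.

Section CircleRotation.
Context {R : realType}.
Implicit Types (t : R * R) (a b th : R).

Definition rotate t th : R * R :=
  (t.1 * cos th - t.2 * sin th, t.1 * sin th + t.2 * cos th).

Lemma rotate0 t : rotate t 0 = t.
Proof. by rewrite /rotate sin0 cos0 !mulr0 !mulr1 subr0 add0r; case: t. Qed.

Lemma rotateD2pi t th : rotate t (th + pi *+ 2) = rotate t th.
Proof. by rewrite /rotate cosD sinD cos2pi sin2pi !mulr0 !mulr1 subr0 addr0. Qed.

Lemma rotate_circle t th : circle R t -> circle R (rotate t th).
Proof.
rewrite /circle /rotate /= => t1.
transitivity ((t.1 ^+ 2 + t.2 ^+ 2) * (cos th ^+ 2 + sin th ^+ 2)); first by ring.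
by rewrite t1 cos2Dsin2 mulr1.
Qed.

Lemma continuous_rotate t : continuous (rotate t).
Proof.
move=> th; apply: (@cvg_pair _ _ _ _ (nbhs _) (nbhs _)).
- by apply: cvgB; apply: cvgM; (try exact: cvg_cst);
    [exact: continuous_cos | exact: continuous_sin].
- by apply: cvgD; apply: cvgM; (try exact: cvg_cst);
    [exact: continuous_sin | exact: continuous_cos].
Qed.

Lemma rotate_inj t a b : circle R t -> `|a - b| < pi ->
  rotate t a = rotate t b -> a = b.
Proof.
rewrite /circle /rotate => t1 ab [e1 e2].
(* the inverse rotation recovers (cos th, sin th) from [rotate t th] *)
have cosE th : cos th = t.1 * (t.1 * cos th - t.2 * sin th) + t.2 * (t.1 * sin th + t.2 * cos th).
  by rewrite -[LHS]mul1r -t1; ring.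
have sinE th : sin th = - t.2 * (t.1 * cos th - t.2 * sin th) + t.1 * (t.1 * sin th + t.2 * cos th).
  by rewrite -[LHS]mul1r -t1; ring.
have sinB0 : sin (a - b) = 0.
  have ca : cos a = cos b by rewrite (cosE a) (cosE b) e1 e2.
  have sa : sin a = sin b by rewrite (sinE a) (sinE b) e1 e2.
  by rewrite sinB ca sa mulrC subrr.
have sin_neq0 (d : R) : 0 < d < pi -> sin d != 0 by move=> /sin_gt0_pi /lt0r_neq0.
case: (ltgtP a b) => // h; exfalso.
- have : sin (b - a) != 0.
    by apply: sin_neq0; rewrite subr_gt0 h -opprB normrN gtr0_norm ?subr_gt0 // in ab *.
  by rewrite -opprB sinN sinB0 oppr0 eqxx.
- have : sin (a - b) != 0.
    by apply: sin_neq0; rewrite subr_gt0 h gtr0_norm ?subr_gt0 // in ab *.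
  by rewrite sinB0 eqxx.
Qed.
End CircleRotation.

Section HeisenbergChart.
Variables (R : realType) (X : topologicalType) (G1 G2 : set X).
Variables (psi1 : R -> X) (g : X -> R).
Hypothesis G1UG2 : G1 `|` G2 = setT.
Hypothesis open_G1 : open G1.
Hypothesis continuous_g : {within G1, continuous g}.
Hypothesis g_neq0 : forall y, G1 y -> g y != 0.
Hypothesis psi1K : forall y, G1 y -> psi1 (g y) = y.
Hypothesis closure_G2_limit : forall A : set R, A `<=` Rtimes R ->
  G2 `&` closure (psi1 @` A) !=set0 -> limit_point A 0.

Let G2_of_not_G1 y : ~ G1 y -> G2 y.
Proof. by move=> nG1y; have [/nG1y[]|] : (G1 `|` G2) y by rewrite G1UG2. Qed.

Lemma chart_small_near_G2 (y : X) (e : R) : G2 y -> 0 < e ->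
  \forall z \near y, G1 z -> `|g z| < e.
Proof.
move=> G2y e0; apply: contrapT => far.
pose B := [set z | G1 z /\ e <= `|g z|].
have clB : closure B y.
  move=> N Ny; apply/set0P/negP => /eqP BN0; apply: far.
  apply: filterS Ny => z Nz G1z; rewrite ltNge; apply/negP => ez.
  by have : (B `&` N) z by []; rewrite BN0.
have psi1gB : psi1 @` (g @` B) = B.
  apply/seteqP; split => [_ [_ [z Bz <-] <-]|z Bz]; first by rewrite psi1K //; case: Bz.
  by exists (g z); [exists z | rewrite psi1K //; case: Bz].
have gBR : g @` B `<=` Rtimes R by move=> _ [z [G1z _] <-]; exact: g_neq0.
have /(closure_G2_limit _ gBR) lim0 : G2 `&` closure (psi1 @` (g @` B)) !=set0.
  by rewrite psi1gB; exists y.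
have [_ [_ [z [_ ez] <-] gze]] := lim0 _ (@nbhs0_lt R R^o e e0).
by move: ez; rewrite leNgt gze.
Qed.

Definition height (s c : R) (y : X) : R :=
  if pselect (G1 y) is left _ then Num.max (s * g y - c) 0 else 0.

Lemma heightE (s c : R) y : G1 y -> height s c y = Num.max (s * g y - c) 0.
Proof. by rewrite /height; case: pselect. Qed.

Lemma height_gt0 (s c : R) y : 0 < height s c y -> G1 y /\ height s c y = s * g y - c.
Proof.
rewrite /height; case: pselect => [G1y|]; last by rewrite ltxx.
by rewrite lt_max ltxx orbF => pos; rewrite max_l ?ltW.
Qed.

Lemma continuous_height (s c : R) : `|s| <= 1 -> 0 < c -> continuous (height s c).
Proof.
move=> s1 c0 y; have [G1y|/[dup] nG1y /G2_of_not_G1 G2y] := pselect (G1 y).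
  have near_G1 : \forall z \near y, G1 z by move: open_G1; rewrite openE; apply.
  have near_max : {near y, (fun z => Num.max (s * g z - c) 0) =1 height s c}.
    by near=> z; rewrite heightE //; near: z.
  apply: cvg_trans (near_eq_cvg near_max) _; rewrite heightE //.
  apply: (@continuous_max _ _ (fun z => s * g z - c) (fun=> 0)); last exact: cvg_cst.
  apply: cvgB; last exact: cvg_cst; apply: cvgM; first exact: cvg_cst.
  by move: y G1y {near_G1 near_max}; apply/in_setP; rewrite -continuous_open_subspace.
rewrite /continuous_at {2}/height; case: pselect => // _; apply: cvg_near_cst.
near=> z; rewrite /height; case: pselect => // G1z; apply/max_r.
rewrite subr_le0 (le_trans (ler_norm _)) // normrM.
apply: le_trans (ler_wpM2r (normr_ge0 _) s1) _; rewrite mul1r ltW //.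
by move: G1z; near: z; apply: chart_small_near_G2.
Unshelve. all: by end_near.
Qed.

Lemma height_inj (s c : R) : s != 0 ->
  {in [set y | 0 < height s c y] &, injective (height s c)}.
Proof.
move=> s0 y z; rewrite !inE => /height_gt0[G1y ->] /height_gt0[G1z ->].
by move=> /addIr /(mulfI s0) gyz; rewrite -(psi1K _ G1y) -(psi1K _ G1z) gyz.
Qed.

Lemma injective_loop_misses_G1 (gamma : R * R -> X) :
  {within circle R, continuous gamma} -> {in circle R &, injective gamma} ->
  forall t, circle R t -> ~ G1 (gamma t).
Proof.
move=> gamma_c gamma_inj t0 t0C G1y0.
pose s := Num.sg (g (gamma t0)); pose c := `|g (gamma t0)| / 2.
have s1 : `|s| <= 1 by rewrite normr_sg; case: (_ != 0).
have s0 : s != 0 by rewrite sgr_eq0 g_neq0.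
have c0 : 0 < c by rewrite divr_gt0 // normr_gt0 g_neq0.
pose F := height s c \o gamma \o rotate t0.
have Fc : continuous F.
  apply: (@continuous_comp_within _ _ _ (circle R)) => [|th|th].
  - by apply: within_continuous_comp gamma_c => y _; exact: continuous_height.
  - exact: continuous_rotate.
  - exact: rotate_circle.
have Fper th : F (th + pi *+ 2) = F th by rewrite /F /= rotateD2pi.
have F0 : F 0 = c.
  rewrite /F /= rotate0 heightE // -normrEsg {1}(splitr `|g (gamma t0)|) addrK.
  by rewrite max_l // ltW.
have pi2_gt0 : 0 < pi *+ 2 :> R by rewrite mulrn_wgt0 ?pi_gt0.
have [x xmax] := continuous_periodic_max _ _ pi2_gt0 Fc Fper.
have Fx : 0 < F x by rewrite (lt_le_trans c0) // -F0 xmax.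
have [d /= d0 Fpos] := (nbhs_ballP _ _).1 (cvgr_gt _ (Fc x) _ Fx).
pose r := Num.min d (pi / 2).
have [rd rpi] : r <= d /\ r <= pi / 2 by rewrite /r !ge_min !lexx ?orbT.
have r0 : 0 < r by rewrite lt_min d0 divr_gt0 ?(@pi_gt0 R).
have Fpos_itv t : t \in `]x - r, x + r[ -> 0 < F t.
  rewrite in_itv /= => /andP[? ?]; apply: Fpos.
  by rewrite ball_itv /= in_itv /=; apply/andP; split; lra.
apply: (continuous_inj_no_local_max F x r r0 (continuous_subspaceT Fc)).
  move=> a b aI bI Fab.
  have rotC th : rotate t0 th \in circle R by rewrite inE; exact: rotate_circle.
  have /gamma_inj rot_ab : gamma (rotate t0 a) = gamma (rotate t0 b).
    by apply: (height_inj _ _ s0 _ _ _ _ Fab); rewrite inE; exact: Fpos_itv.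
  apply: rotate_inj t0C _ (rot_ab (rotC a) (rotC b)).
  move: aI bI; rewrite !in_itv /= => /andP[? ?] /andP[? ?].
  by rewrite ltr_norml; apply/andP; split; lra.
by move=> t _; exact: xmax.
Qed.
End HeisenbergChart.

Theorem lemma2p6 (R : realType) (X : topologicalType) (G1 G2 : set X) :
  heisenberg_partition R X G1 G2 ->
  forall gamma : (R * R)%type -> X,
    {within circle R, continuous gamma} ->
    {in circle R &, injective gamma} ->
    gamma @` circle R `<=` G2.
Proof.
move=> [_ G1UG2 [_ [_ [psi1 [_ [open_G1 [_ img_psi1 [g [g_c psi1K]]] _ heis]]]]]].
move=> gamma gamma_c gamma_inj _ [t tC <-].
have [G1t|//] : (G1 `|` G2) (gamma t) by rewrite G1UG2.
have G1_psi1 y : G1 y -> exists2 x, Rtimes R x & psi1 x = y.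
  by rewrite -img_psi1 => -[x ? <-]; exists x.
exfalso; apply: (injective_loop_misses_G1 _ _ _ _ psi1 g G1UG2 open_G1 g_c _ _ _
  gamma gamma_c gamma_inj t tC G1t).
- by move=> y /G1_psi1[x x0 <-]; rewrite psi1K.
- by move=> y /G1_psi1[x x0 <-]; rewrite psi1K.
- by move=> A AR; case: (heis A AR) => -[].
Qed.
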